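(* Let $(\mathsf{L}, \models)$ be a self-complementary logic on graphs for which there exists a class $\mathcal{F}$ of simple graphs such that any two simple graphs $G$ and $H$ are homomorphism indistinguishable over $\mathcal{F}$ if and only if they are $\mathsf{L}$-equivalent. Then there exists a minor-closed class $\mathcal{F}'$ of simple graphs such that any two simple graphs $G$ and $H$ are homomorphism indistinguishable over $\mathcal{F}'$ if and only if they are $\mathsf{L}$-equivalent.
   Context: All graphs are finite, undirected, without multiple edges; a simple graph is one without loops. A homomorphism $F \to G$ is a map $h\colon V(F)\to V(G)$ with $h(u)h(v)\in E(G)$ whenever $uv \in E(F)$, and looped vertices mapped to looped vertices; $\hom(F,G)$ is the number of homomorphisms. For a graph class $\mathcal{F}$, $G$ and $H$ are homomorphism indistinguishable over $\mathcal{F}$ (written $G \equiv_{\mathcal{F}} H$) if $\hom(F,G)=\hom(F,H)$ for all $F\in\mathcal{F}$. A logic on graphs is a pair $(\mathsf{L},\models)$ of a class $\mathsf{L}$ of sentences and a relation $\models$ between graphs and sentences that is isomorphism-invariant ($G\cong H$ implies $G\models\phi \iff H\models\phi$ for all $\phi\in\mathsf{L}$). Graphs $G,H$ are $\mathsf{L}$-equivalent if $G\models\phi \iff H\models \phi$ for all $\phi\in\mathsf{L}$. The logic is self-complementary if for every $\phi\in\mathsf{L}$ there is $\overline{\phi}\in\mathsf{L}$ such that for all simple graphs $G$, $G\models\phi$ iff $\overline{G}\models\overline{\phi}$, where $\overline{G}$ is the complement graph (same vertex set, edges exactly the non-edges between distinct vertices). A minor of a simple graph $F$ is a subgraph of a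 graph obtained from $F$ by contracting edges; a class is minor-closed if it contains all minors of its members. *)

From mathcomp Require Import all_boot.
Set Implicit Arguments. Unset Strict Implicit. Unset Printing Implicit Defensive.

(* A finite undirected graph without multiple edges; loops allowed
   (a loop at v is  gE v v). *)
Record graph := Graph {
  gV :> finType;
  gE : rel gV;
  gE_sym : symmetric gE }.

Definition simple (G : graph) : Prop := forall v : G, ~~ gE v v.

Definition homb (F G : graph) (h : {ffun F -> G}) : bool :=
  [forall u : F, forall v : F, gE u v ==> gE (h u) (h v)].

Definition hom (F G : graph) : nat := #|[pred h : {ffun F -> G} | homb h]|.

Definition iso (G H : graph) : Prop :=
  exists f : G -> H, bijective f /\ forall x y : G, gE x y = gE (f x) (f y).

Lemma compl_sym (G : graph) :
  symmetric (fun x y : G => (x != y) && ~~ gE x y).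
Proof. by move=> x y; rewrite eq_sym gE_sym. Qed.

Definition compl (G : graph) : graph :=
  @Graph G (fun x y : G => (x != y) && ~~ gE x y) (@compl_sym G).

Definition iso_invariant (L : Type) (models : graph -> L -> Prop) : Prop :=
  forall G H : graph, iso G H -> forall phi : L, models G phi <-> models H phi.

Definition self_complementary (L : Type) (models : graph -> L -> Prop) : Prop :=
  forall phi : L, exists phibar : L,
    forall G : graph, simple G -> (models G phi <-> models (compl G) phibar).

Definition L_equiv (L : Type) (models : graph -> L -> Prop) (G H : graph) : Prop :=
  forall phi : L, models G phi <-> models H phi.

Definition hom_indist (C : graph -> Prop) (G H : graph) : Prop :=
  forall F : graph, C F -> hom F G = hom F H.

(* Minors via minor models (branch sets): F' is a minor of F iff there is a
   partial map phi : V(F) -> option V(F') whose fibres over V(F') (branch sets)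
   are nonempty and induce connected subgraphs of F, and such that every edge
   of F' is realised by an edge of F between the corresponding branch sets.
   This is exactly "isomorphic to a subgraph of a graph obtained from F by
   contracting edges". *)
Definition branch (F F' : graph) (phi : F -> option F') (v : F') : pred F :=
  [pred x | phi x == Some v].

Definition is_minor (F' F : graph) : Prop :=
  exists phi : F -> option F',
    (forall v : F', exists x : F, phi x == Some v) /\
    (forall (v : F') (x y : F), phi x == Some v -> phi y == Some v ->
        connect [rel a b | [&& gE a b, phi a == Some v & phi b == Some v]] x y) /\
    (forall v w : F', gE v w ->
        exists x y : F, [&& phi x == Some v, phi y == Some w & gE x y]).

Definition minor_closed (C : graph -> Prop) : Prop :=
  forall F F' : graph, C F -> simple F' -> is_minor F' F -> C F'.

From mathcomp Require Import all_boot all_algebra zify.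
From Stdlib Require Import ClassicalEpsilon Classical.
Set Implicit Arguments. Unset Strict Implicit. Unset Printing Implicit Defensive.
Import GRing.Theory Num.Theory.

(* Call a graph [F] good if [hom F] is constant on the classes of
   [L]-equivalence; by hypothesis, homomorphism indistinguishability over the
   good simple graphs is [L]-equivalence, so it suffices to show that good
   graphs are closed under minors.  [L]-equivalence of simple graphs is
   preserved by complementation (self-complementarity) and by the categorical
   product with any graph ([hom F] is multiplicative).  Expanding the
   non-edges of [compl (G x K)] by inclusion-exclusion writes
   [hom F (compl (G x K))] as a signed sum of homomorphism counts from graphs
   obtained from [F] by identifying some pairs of vertices and keeping some
   edges; these counts are multiplicative in [K], so by Dedekind's
   independence of characters every group of terms defining the same function
   of [K] has an invariant total coefficient.  Counting into large complete
   graphs separates the term that deletes, or contracts, a single edge from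
   all others, so both operations preserve goodness, and a minor model is
   reached by deleting all edges except a spanning forest of the branch sets
   and one edge per edge of the minor, then contracting the forest. *)

Lemma tensor_sym (G K : graph) :
  symmetric (fun p q : (gV G * gV K)%type => gE p.1 q.1 && gE p.2 q.2).
Proof. by move=> p q; rewrite gE_sym [gE p.2 _]gE_sym. Qed.

Definition tensor (G K : graph) : graph := @Graph (gV G * gV K)%type _ (@tensor_sym G K).

Lemma complete_sym n : symmetric (fun x y : 'I_n => x != y).
Proof. by move=> x y; rewrite eq_sym. Qed.

Definition complete n : graph := @Graph 'I_n _ (@complete_sym n).

Lemma tensor_simple G K : simple G -> simple (tensor G K).
Proof. by move=> sG [x a] /=; rewrite (negbTE (sG x)). Qed.

Lemma complete_simple n : simple (complete n).
Proof. by move=> x /=; rewrite eqxx. Qed.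

Lemma compl_simple G : simple (compl G).
Proof. by move=> x /=; rewrite eqxx. Qed.

Lemma card_complete n : #|complete n| = n.
Proof. exact: card_ord. Qed.

Lemma forall_in_setU (T : finType) (D1 D2 : {set T}) (c : pred T) :
  [forall x in D1 :|: D2, c x] = [forall x in D1, c x] && [forall x in D2, c x].
Proof.
apply/forall_inP/andP => [H|[H1 H2] x].
  by split; apply/forall_inP => x xD; apply: H; rewrite inE xD ?orbT.
by rewrite inE => /orP[] xD; [exact: (forall_inP H1) | exact: (forall_inP H2)].
Qed.

Section ConstrainedHoms.
Variable X : finType.
Implicit Types (A B : {set X * X}) (G K : graph).

(* [chom A B G] counts the homomorphisms into [G] of the graph obtained from
   the vertex set [X] by identifying the pairs in [A] and joining the pairs in
   [B]; minors of a graph on [X] are handled through such pairs of sets. *)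
Definition identifies G A (h : {ffun X -> G}) := [forall p in A, h p.1 == h p.2].
Definition adjacent_on G B (h : {ffun X -> G}) := [forall p in B, gE (h p.1) (h p.2)].
Definition cmaps G A B := [set h : {ffun X -> G} | identifies A h && adjacent_on B h].
Definition chom A B G := #|cmaps G A B|.

Definition pair_ffun G K (hh : {ffun X -> G} * {ffun X -> K}) : {ffun X -> tensor G K} :=
  [ffun x => (hh.1 x, hh.2 x)].

Lemma pair_ffun_inj G K : injective (@pair_ffun G K).
Proof.
move=> [h1 h2] [k1 k2] /ffunP E.
by congr pair; apply/ffunP => x; have := E x; rewrite !ffunE => -[].
Qed.

Lemma cmaps_tensor A B G K :
  cmaps (tensor G K) A B = @pair_ffun G K @: setX (cmaps G A B) (cmaps K A B).
Proof.
apply/setP => h; rewrite !inE; apply/idP/imsetP.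
  move=> /andP[hA hB]; exists ([ffun x => (h x).1], [ffun x => (h x).2]).
    rewrite !inE /identifies /adjacent_on -!andbA.
    apply/and4P; split; apply/forall_inP => p pAB; rewrite !ffunE.
    - by rewrite (eqP (forall_inP hA p pAB)).
    - by case/andP: (forall_inP hB p pAB).
    - by rewrite (eqP (forall_inP hA p pAB)).
    - by case/andP: (forall_inP hB p pAB).
  by apply/ffunP => x; rewrite !ffunE; case: (h x).
move=> [[h1 h2]]; rewrite !inE => /andP[/andP[a1 b1] /andP[a2 b2]] ->.
apply/andP; split; apply/forall_inP => p pAB; rewrite !ffunE /=.
  by rewrite xpair_eqE (forall_inP a1 p pAB) (forall_inP a2 p pAB).
by rewrite (forall_inP b1 p pAB) (forall_inP b2 p pAB).
Qed.

Lemma chomM A B G K : chom A B (tensor G K) = chom A B G * chom A B K.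
Proof. by rewrite /chom cmaps_tensor (card_imset _ (@pair_ffun_inj G K)) cardsX. Qed.

Lemma chom_mono G A A' B B' : A \subset A' -> B \subset B' ->
  chom A' B' G <= chom A B G.
Proof.
move=> sA sB; apply: subset_leq_card; apply/subsetP => h; rewrite !inE.
case/andP => hA hB; apply/andP; split.
  by apply/forall_inP => p pA; apply: (forall_inP hA); exact: (subsetP sA).
by apply/forall_inP => p pB; apply: (forall_inP hB); exact: (subsetP sB).
Qed.

Lemma adjacent_on0 G (h : {ffun X -> G}) : adjacent_on set0 h.
Proof. by apply/forall_inP => p; rewrite inE. Qed.

Lemma identifiesU1 G q A (h : {ffun X -> G}) :
  identifies (q |: A) h = (h q.1 == h q.2) && identifies A h.
Proof.
rewrite /identifies forall_in_setU; congr (_ && _); apply/forall_inP/idP => [H|H p].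
  by apply: H; rewrite inE.
by rewrite inE => /eqP ->.
Qed.

Lemma chom00 G : chom set0 set0 G = #|G| ^ #|X|.
Proof.
rewrite /chom -card_ffun; apply: eq_card => h; rewrite !inE adjacent_on0 andbT.
by apply/forall_inP => p; rewrite inE.
Qed.

End ConstrainedHoms.

Definition edge_pairs (F : graph) : {set F * F} := [set p | gE p.1 p.2].

Lemma hom_chom (F G : graph) : hom F G = chom set0 (edge_pairs F) G.
Proof.
rewrite /hom /chom; apply: eq_card => h; rewrite !inE /identifies /adjacent_on /homb.
have -> : [forall p in set0, h p.1 == h p.2] by apply/forall_inP => p; rewrite inE.
apply/forallP/forall_inP => /=.
  by move=> H p; rewrite inE => Hp; have := forallP (H p.1) p.2; rewrite Hp.
by move=> H u; apply/forallP => v; apply/implyP => uv; apply: (H (u, v)); rewrite inE.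
Qed.

Lemma homM (F G K : graph) : hom F (tensor G K) = hom F G * hom F K.
Proof. by rewrite !hom_chom chomM. Qed.

Lemma iso_complK (G : graph) : simple G -> iso G (compl (compl G)).
Proof.
move=> sG; exists id; split; first by exists id.
move=> x y /=; case: (eqVneq x y) => [->|xy] /=; first by rewrite (negbTE (sG y)).
by rewrite negbK.
Qed.

Lemma L_equiv_compl L (models : graph -> L -> Prop) (G H : graph) :
  iso_invariant models -> self_complementary models -> simple G -> simple H ->
  L_equiv models G H -> L_equiv models (compl G) (compl H).
Proof.
move=> Hinv Hsc sG sH E phi; have [psi Hpsi] := Hsc phi.
have compl_models K : simple K -> models (compl K) phi <-> models K psi.
  move=> sK; apply: (iff_trans (Hpsi _ (@compl_simple K))).
  exact: iff_sym (Hinv _ _ (iso_complK sK) psi).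
have [eG eH] := (compl_models G sG, compl_models H sH).
by split=> [/eG/(E psi)/eH | /eH/(E psi)/eG].
Qed.

Lemma hom_indist_tensor C (G H K : graph) :
  hom_indist C G H -> hom_indist C (tensor G K) (tensor H K).
Proof. by move=> E F CF; rewrite !homM (E F CF). Qed.

Definition classicb (P : Prop) : bool :=
  if excluded_middle_informative P then true else false.

Lemma classicbP (P : Prop) : reflect P (classicb P).
Proof. by rewrite /classicb; case: excluded_middle_informative => p; constructor. Qed.

Section MultiplicativeIndependence.
Local Open Scope ring_scope.
Variables (R : idomainType) (T : Type) (D : T -> Prop) (mul : T -> T -> T).
Hypothesis mulD : forall x y, D x -> D y -> D (mul x y).
Variables (I : finType) (P : pred I) (psi : I -> T -> R).
Hypothesis psiM : forall i x y, D x -> D y -> psi i (mul x y) = psi i x * psi i y.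

Definition agree i j : bool := classicb (forall x, D x -> psi i x = psi j x).

Lemma agree_refl i : agree i i.
Proof. exact/classicbP. Qed.

Let lin_rel (a : I -> R) := forall y, D y -> \sum_(i | P i) a i * psi i y = 0.
Let outsiders (a : I -> R) i0 := [pred i | P i && (a i != 0) && ~~ agree i i0].

Lemma no_outsiders_sum_agree_eq0 a i0 x0 : lin_rel a -> D x0 -> psi i0 x0 != 0 ->
  #|outsiders a i0| = 0%N -> \sum_(i | P i && agree i i0) a i = 0.
Proof.
move=> rel_a Dx0 nz0 /card0_eq out0.
have := rel_a x0 Dx0; rewrite (bigID (agree^~ i0)) /= [X in _ + X]big1; last first.
  move=> i /andP[Pi ni]; case: (eqVneq (a i) 0) => [->|ai]; first by rewrite mul0r.
  by have := out0 i; rewrite !inE Pi ai ni.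
rewrite addr0 (eq_bigr (fun i => a i * psi i0 x0)); last first.
  by move=> i /andP[_ /classicbP ->].
by rewrite -mulr_suml => /eqP; rewrite mulf_eq0 (negbTE nz0) orbF => /eqP.
Qed.

(* Dedekind's trick: evaluating the relation at [mul x y] and subtracting
   [psi j x] times it at [y] kills the index [j] and multiplies the agreement
   class of [i0] by the nonzero scalar [psi i0 x - psi j x]. *)
Lemma sum_agree_eq0 a i0 : lin_rel a -> (exists2 x0, D x0 & psi i0 x0 != 0) ->
  \sum_(i | P i && agree i i0) a i = 0.
Proof.
move=> + [x0 Dx0 nz0]; move: {2}#|outsiders a i0| (leqnn #|outsiders a i0|) => n.
elim: n a => [|n IH] a out_n rel_a.
  by apply: no_outsiders_sum_agree_eq0 rel_a Dx0 nz0 _; apply/eqP; rewrite -leqn0.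
case: (pickP (outsiders a i0)) => [j|none]; last first.
  by apply: no_outsiders_sum_agree_eq0 rel_a Dx0 nz0 _; apply: eq_card0.
rewrite !inE => /andP[/andP[Pj aj] /classicbP dis].
have [x [Dx xne]] : exists x, D x /\ psi j x != psi i0 x.
  apply: NNPP => H; apply: dis => y Dy; apply: NNPP => ne; apply: H.
  by exists y; split => //; apply/eqP.
pose a' i := a i * (psi i x - psi j x).
have rel_a' : lin_rel a'.
  move=> y Dy; rewrite /a'.
  under eq_bigr do rewrite mulrBr mulrBl -mulrA -psiM // -mulrA mulrCA.
  by rewrite sumrB -mulr_sumr (rel_a _ (mulD Dx Dy)) (rel_a _ Dy) mulr0 subr0.
have out_a' : (#|outsiders a' i0| <= n)%N.
  rewrite -ltnS; apply: leq_trans out_n; apply: proper_card; apply/properP; split.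
    by apply/subsetP => i; rewrite !inE /a' mulf_eq0 negb_or -!andbA => /and4P[-> -> _ ->].
  by exists j; rewrite !inE ?Pj ?aj /a' ?subrr ?mulr0 ?eqxx ?andbF //=; apply/classicbP.
have := IH a' out_a' rel_a'.
rewrite (eq_bigr (fun i => a i * (psi i0 x - psi j x))); last first.
  by move=> i /andP[_ /classicbP s]; rewrite /a' s.
rewrite -mulr_suml => /eqP; rewrite mulf_eq0 subr_eq0 [psi i0 x == _]eq_sym (negbTE xne).
by rewrite orbF => /eqP.
Qed.

End MultiplicativeIndependence.

Lemma card_sum_indicator (T : finType) (S : {set T}) : #|S| = \sum_x (x \in S : nat).
Proof. by rewrite -sum1_card big_mkcond; apply: eq_bigr => x _; case: (x \in S). Qed.

Notation labellings B := (pffun_on ord0 (fun p => p \in B) predT).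

Section ComplementExpansion.
Local Open Scope ring_scope.
Variable X : finType.
Implicit Types (A B : {set X * X}) (t : {ffun X * X -> 'I_3}) (G : graph).

Definition indicator (b : bool) : int := (b : nat)%:R.

Lemma indicator_and a b : indicator (a && b) = indicator a * indicator b.
Proof. by case: a; case: b; rewrite /indicator /= ?mulr1 ?mulr0. Qed.

Lemma indicator_forall (T : finType) (S : {set T}) (c : pred T) :
  indicator [forall x in S, c x] = \prod_(x in S) indicator (c x).
Proof.
case: (boolP [forall x in S, c x]) => H.
  by rewrite big1 // => x xS; rewrite (forall_inP H x xS).
have [x xS ncx] := forall_inPn H.
by rewrite (bigD1 x) //= (negbTE ncx) /indicator mul0r.
Qed.

(* For simple [G], the indicator that [h x] and [h y] are adjacent in
   [compl G] is [1 - (h x == h y) - (h x ~ h y)].  A labelling [t] of the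
   pairs of [B] picks one of these three terms for each pair: label 0 for [1],
   label 1 for an identification (the pairs of [ident_part t B]), label 2 for
   an edge (the pairs of [edge_part t B]). *)
Definition ident_part t B := [set p in B | t p == 1%N :> nat].
Definition edge_part t B := [set p in B | t p == 2%N :> nat].

Definition compl_term G (h : {ffun X -> G}) (p : X * X) (j : 'I_3) : int :=
  if j == 0%N :> nat then 1
  else if j == 1%N :> nat then - indicator (h p.1 == h p.2)
  else - indicator (gE (h p.1) (h p.2)).

Lemma sum_compl_term G (h : {ffun X -> G}) p : simple G ->
  \sum_(j < 3) compl_term h p j = indicator ((h p.1 != h p.2) && ~~ gE (h p.1) (h p.2)).
Proof.
move=> sG; rewrite !big_ord_recr big_ord0 /= /compl_term /= add0r.
case: (eqVneq (h p.1) (h p.2)) => [->|_]; first by rewrite (negbTE (sG _)).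
by case: (gE _ _).
Qed.

Lemma prod_compl_term G (h : {ffun X -> G}) B t :
  \prod_(p in B) compl_term h p (t p) =
  (-1) ^+ (#|ident_part t B| + #|edge_part t B|) *
   (\prod_(p in ident_part t B) indicator (h p.1 == h p.2) *
    \prod_(p in edge_part t B) indicator (gE (h p.1) (h p.2))).
Proof.
rewrite (bigID (fun p => t p == 0%N :> nat)) /= big1; last first.
  by move=> p /andP[_ /eqP e]; rewrite /compl_term e.
rewrite mul1r (bigID (fun p => t p == 1%N :> nat)) /=.
rewrite (eq_bigl (fun p => p \in ident_part t B)); last first.
  by move=> p; rewrite !inE; case: (p \in B); case: (t p) => -[|[|[|]]].
rewrite [X in _ * X](eq_bigl (fun p => p \in edge_part t B)); last first.
  by move=> p; rewrite !inE; case: (p \in B); case: (t p) => -[|[|[|]]].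
rewrite (eq_bigr (fun p => - indicator (h p.1 == h p.2))); last first.
  by move=> p; rewrite inE /compl_term => /andP[_ /eqP ->].
rewrite [X in _ * X](eq_bigr (fun p => - indicator (gE (h p.1) (h p.2)))); last first.
  by move=> p; rewrite inE /compl_term => /andP[_ /eqP ->].
by rewrite !prodrN exprD -!mulrA; congr (_ * _); rewrite mulrCA.
Qed.

Lemma chom_compl A B G : simple G ->
  (chom A B (compl G))%:R = (
  \sum_(t in labellings B) (-1) ^+ (#|ident_part t B| + #|edge_part t B|) *
     (chom (A :|: ident_part t B) (edge_part t B) G)%:R :> int).
Proof.
move=> sG; rewrite /chom card_sum_indicator natr_sum.
transitivity (\sum_(h : {ffun X -> G}) indicator (identifies A h) *
                 \prod_(p in B) \sum_(j < 3) compl_term h p j).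
  apply: eq_bigr => h _; rewrite inE -/(indicator _) indicator_and /adjacent_on.
  by rewrite indicator_forall; congr (_ * _); apply: eq_bigr => p _; rewrite sum_compl_term.
under eq_bigr do rewrite (big_distr_big ord0) mulr_sumr.
rewrite exchange_big /=; apply: eq_bigr => t _.
rewrite [#|cmaps _ _ _|]card_sum_indicator natr_sum mulr_sumr; apply: eq_bigr => h _.
rewrite prod_compl_term mulrCA inE -/(indicator _); congr (_ * _).
by rewrite !indicator_and /identifies forall_in_setU indicator_and !indicator_forall mulrA.
Qed.

End ComplementExpansion.

Section Connectivity.
Variable X : finType.
Implicit Types (A S : {set X * X}) (G : graph).

Definition pair_rel A : rel X := fun x y => ((x, y) \in A) || ((y, x) \in A).

Lemma pair_rel_sym A : symmetric (pair_rel A).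
Proof. by move=> x y; rewrite /pair_rel orbC. Qed.

Definition conn A := connect (pair_rel A).

Lemma conn_sym A x y : conn A x y = conn A y x.
Proof. exact: (sym_connect_sym (@pair_rel_sym A)). Qed.

Lemma conn0 A x : conn A x x.
Proof. exact: connect0. Qed.

Lemma conn_trans A y x z : conn A x y -> conn A y z -> conn A x z.
Proof. exact: connect_trans. Qed.

Lemma conn_edge A p : p \in A -> conn A p.1 p.2.
Proof. by case: p => x y pA; apply: connect1; rewrite /pair_rel pA. Qed.

Lemma conn_class A p x : p \in A -> conn A x p.1 = conn A x p.2.
Proof.
move=> pA; apply/idP/idP => c; apply: conn_trans c _; first exact: conn_edge.
by rewrite conn_sym; exact: conn_edge.
Qed.

Lemma conn_mono S S' x y : S \subset S' -> conn S x y -> conn S' x y.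
Proof.
move=> sS; apply: connect_sub => a b /orP[] E; apply: connect1; rewrite /pair_rel.
  by rewrite (subsetP sS _ E).
by rewrite (subsetP sS _ E) orbT.
Qed.

Lemma conn_set0 x y : conn set0 x y -> x = y.
Proof. by case/connectP=> -[_ //|z p] /=; rewrite /pair_rel !inE. Qed.

Lemma conn_label (T : eqType) (lab : X -> T) S x y :
  (forall p, p \in S -> lab p.1 = lab p.2) -> conn S x y -> lab x = lab y.
Proof.
move=> H /connectP[p pth ->] {y}; elim: p x pth => //= z p IH x /andP[xz /IH <-].
by case/orP: xz => /H.
Qed.

Lemma identifies_conn G A (h : {ffun X -> G}) x y :
  identifies A h -> conn A x y -> h x = h y.
Proof. by move=> hA; apply: conn_label => p /(forall_inP hA) /eqP. Qed.

Lemma conn_U1 A q x y : conn (q |: A) x y ->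
  [|| conn A x y, conn A x q.1 && conn A q.2 y | conn A x q.2 && conn A q.1 y].
Proof.
move=> /connectP[p pth ->] {y}; elim: p x pth => [|z p IH] x /=.
  by rewrite conn0.
case/andP => xz /IH {IH}; set y := last z p.
have step a b : conn A a b ->
    [|| conn A b y, conn A b q.1 && conn A q.2 y | conn A b q.2 && conn A q.1 y] ->
    [|| conn A a y, conn A a q.1 && conn A q.2 y | conn A a q.2 && conn A q.1 y].
  move=> ab /or3P[hby|/andP[b1 y2]|/andP[b2 y1]].
  - by rewrite (conn_trans ab hby).
  - by rewrite (conn_trans ab b1) y2 orbT.
  - by rewrite (conn_trans ab b2) y1 !orbT.
have : [|| (x, z) \in A, (z, x) \in A, (x, z) == q | (z, x) == q].
  by move: xz; rewrite /pair_rel !in_setU1 => /orP[/orP[]|/orP[]] ->; rewrite ?orbT.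
case/or4P => [E|E|/eqP E|/eqP E].
- by apply: step; apply: connect1; rewrite /pair_rel E.
- by apply: step; apply: connect1; rewrite /pair_rel E orbT.
- rewrite -E /= => /or3P[zy|/andP[z1 y2]|/andP[z2 y1]].
  + by rewrite conn0 zy orbT.
  + by rewrite conn0 y2 orbT.
  + by rewrite y1.
- rewrite -E /= => /or3P[zy|/andP[z1 y2]|/andP[z2 y1]].
  + by rewrite conn0 zy !orbT.
  + by rewrite y2.
  + by rewrite (conn_trans _ y1) // conn_sym.
Qed.

End Connectivity.

Section CountingOnCompleteGraphs.
Variable X : finType.
Implicit Types (A B Q : {set X * X}) (G : graph).

Lemma chom_loop G A Q q : simple G -> q \in Q -> conn A q.1 q.2 -> chom A Q G = 0.
Proof.
move=> sG qQ c; apply/eqP; rewrite cards_eq0; apply/eqP/setP => h; rewrite !inE.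
apply/negP => /andP[hA hB]; have := forall_inP hB q qQ.
by rewrite /= (identifies_conn hA c) (negbTE (sG _)).
Qed.

(* A map identifying [A] is a map identifying [(u, v) |: A] with the image
   of the [A]-class of [v] chosen afresh. *)
Lemma chom_cross G A u v : ~~ conn A u v ->
  chom ((u, v) |: A) set0 G * #|G| = chom A set0 G.
Proof.
move=> nc; rewrite /chom -cardsT -cardsX.
pose rechoose (ha : {ffun X -> G} * G) : {ffun X -> G} :=
  [ffun x => if conn A v x then ha.2 else ha.1 x].
have nvu : ~~ conn A v u by rewrite conn_sym.
have rechooseA h a : identifies A h -> identifies A (rechoose (h, a)).
  move=> hA; apply/forall_inP => p pA; rewrite !ffunE /= (conn_class _ pA).
  by case: ifP => //; rewrite (forall_inP hA p pA).
rewrite -(@card_in_imset _ _ rechoose); last first.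
  move=> [h1 a1] [h2 a2]; rewrite !inE /= !andbT !identifiesU1 !adjacent_on0 !andbT /=.
  move=> /andP[/eqP e1 hA1] /andP[/eqP e2 hA2] /ffunP E.
  have ea : a1 = a2 by have := E v; rewrite !ffunE conn0.
  congr pair => //; apply/ffunP => x; have := E x; rewrite !ffunE.
  case: ifP => // cx _; rewrite [h1 x](identifies_conn hA1 (y := v)) 1?conn_sym //.
  rewrite [h2 x](identifies_conn hA2 (y := v)) 1?conn_sym // -e1 -e2.
  by have := E u; rewrite !ffunE (negbTE nvu).
apply: eq_card => h; rewrite [in RHS]inE adjacent_on0 andbT; apply/imsetP/idP.
  move=> [[h' a]]; rewrite !inE adjacent_on0 !andbT identifiesU1 => /andP[_ hA] ->.
  exact: rechooseA.
move=> hA; exists (rechoose (h, h u), h v).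
  rewrite !inE adjacent_on0 andbT identifiesU1 rechooseA // andbT.
  by rewrite /rechoose !ffunE /= (negbTE nvu) conn0 eqxx.
apply/ffunP => x; rewrite /rechoose !ffunE /=.
by case: ifP => c; [apply: (identifies_conn hA); rewrite conn_sym | rewrite c].
Qed.

Lemma union_bound n A Q :
  chom A set0 (complete n) <=
  chom A Q (complete n) + \sum_(q in Q) chom (q |: A) set0 (complete n).
Proof.
rewrite /chom !card_sum_indicator.
under [X in (_ <= _ + X)%N]eq_bigr => q _ do rewrite card_sum_indicator.
rewrite exchange_big /= -big_split /=; apply: leq_sum => h _.
rewrite !inE adjacent_on0 andbT; case hA: (@identifies _ (complete n) A h) => //=.
case hQ: (@adjacent_on _ (complete n) Q h) => //=.
have [q qQ nq] := forall_inPn (negbT hQ).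
rewrite add0n (bigD1 q) //= !inE adjacent_on0 identifiesU1 hA /= andbT.
by move: nq; rewrite /= negbK => ->.
Qed.

(* Second Bonferroni inequality, pointwise: a map identifying [A] and exactly
   [k] of the pairs of [Q] contributes [k == 0] + [k] to the left-hand side
   and [1] + [k (k - 1)] to the right-hand side. *)
Lemma bonferroni n A Q :
  chom A Q (complete n) + \sum_(q in Q) chom (q |: A) set0 (complete n) <=
  chom A set0 (complete n) +
    \sum_(q in Q) \sum_(q' in Q | q' != q) chom (q |: (q' |: A)) set0 (complete n).
Proof.
rewrite /chom !card_sum_indicator.
under [X in (_ + X <= _)%N]eq_bigr => q _ do rewrite card_sum_indicator.
under [X in (_ <= _ + X)%N]eq_bigr => q _ do
  (under eq_bigr => q' _ do rewrite card_sum_indicator).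
rewrite [X in (_ + X <= _)%N]exchange_big /=.
under [X in (_ <= _ + X)%N]eq_bigr => q _ do rewrite exchange_big /=.
rewrite [X in (_ <= _ + X)%N]exchange_big /= -!big_split /=; apply: leq_sum => h _.
rewrite !inE !adjacent_on0 !andbT.
under eq_bigr => q _ do rewrite inE adjacent_on0 andbT identifiesU1.
under [X in (_ <= _ + X)%N]eq_bigr => q _ do
  (under eq_bigr => q' _ do rewrite inE adjacent_on0 andbT !identifiesU1).
case: (@identifies _ (complete n) A h); last by rewrite /= big1 // => q _; rewrite andbF.
pose m q := h q.1 == h q.2; set k := \sum_(q in Q) (m q : nat).
have -> : \sum_(q in Q) (h q.1 == h q.2) && true = k by apply: eq_bigr => q _; rewrite andbT.
have pairs : \sum_(q in Q) \sum_(q' in Q | q' != q) [&& m q, m q' & true]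
   = \sum_(q in Q) m q * (k - m q).
  apply: eq_bigr => q qQ; rewrite /k (bigD1 q qQ) /= addKn big_distrr /=.
  by apply: eq_bigr => q' _; rewrite andbT; case: (m q); case: (m q').
have pairsE : k + \sum_(q in Q) m q * (k - m q) = k * k.
  transitivity (\sum_(q in Q) m q * k); last by rewrite -big_distrl.
  rewrite {1}/k -big_split /=; apply: eq_bigr => q qQ.
  have : m q <= k by rewrite /k (bigD1 q qQ) leq_addr.
  by case: (m q) => //= ?; rewrite !mul1n; lia.
have -> : @adjacent_on _ (complete n) Q h = (k == 0).
  rewrite /adjacent_on /k sum_nat_eq0; apply/forall_inP/forall_inP => H q /H;
    by rewrite /m /=; case: (h q.1 == h q.2).
rewrite pairs; move: pairsE; set S2 := \sum_(q in Q) _ => pairsE.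
by case: (eqVneq k 0) => [->|kn] /=; [|nia].
Qed.

End CountingOnCompleteGraphs.

Section CompleteGraphEstimates.
Variable X : finType.
Implicit Types A B Q : {set X * X}.

Definition loopless_mod A B := forall q, q \in B -> ~~ conn A q.1 q.2.

Definition parallel_free_mod A B :=
  forall q q', q \in B -> q' \in B -> q != q' -> ~~ conn (q' |: A) q.1 q.2.

Lemma loopless_mod_sub A B B' : B' \subset B -> loopless_mod A B -> loopless_mod A B'.
Proof. by move=> sB lB q /(subsetP sB); apply: lB. Qed.

Variable n : nat.
Local Notation W S := (chom S set0 (complete n)).

Lemma chom_complete_gt0 A : 0 < n -> 0 < W A.
Proof.
move=> n0; apply/card_gt0P; exists [ffun _ => (Ordinal n0 : complete n)].
by rewrite inE adjacent_on0 andbT; apply/forall_inP => p _; rewrite !ffunE.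
Qed.

Lemma chom_complete_cross A q : ~~ conn A q.1 q.2 -> n * W (q |: A) = W A.
Proof. by case: q => u v c; rewrite mulnC -[X in _ * X]card_complete chom_cross. Qed.

Lemma chom_complete_lower A Q : loopless_mod A Q ->
  n * W A <= n * chom A Q (complete n) + #|Q| * W A.
Proof.
move=> lQ; have := leq_mul (leqnn n) (union_bound n A Q).
rewrite mulnDr big_distrr /= (eq_bigr (fun _ => W A)) ?sum_nat_const //.
by move=> q qQ; rewrite chom_complete_cross // lQ.
Qed.

Lemma chom_complete_upper A Q : loopless_mod A Q -> parallel_free_mod A Q ->
  n * n * chom A Q (complete n) + n * #|Q| * W A <=
  n * n * W A + #|Q| * (#|Q| - 1) * W A.
Proof.
move=> lQ pQ; have := leq_mul (leqnn (n * n)) (bonferroni n A Q).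
rewrite !mulnDr !big_distrr /= (eq_bigr (fun _ => n * W A)); last first.
  by move=> q qQ; rewrite -mulnA chom_complete_cross // lQ.
rewrite [X in _ <= _ + X](eq_bigr (fun _ => (#|Q| - 1) * W A)); last first.
  move=> q qQ; rewrite big_distrr /= (eq_bigr (fun _ => W A)); last first.
    move=> q' /andP[q'Q q'q].
    by rewrite -mulnA !chom_complete_cross // ?lQ // pQ // eq_sym.
  rewrite (eq_bigl (mem (Q :\ q))) ?sum_nat_const; last by move=> q'; rewrite !inE andbC.
  by rewrite (cardsD1 q Q) qQ add1n subn1.
by rewrite !sum_nat_const !mulnA [n * #|Q|]mulnC.
Qed.

End CompleteGraphEstimates.

Lemma lower_bound_lt n W T q : 0 < W -> q.+1 < n -> n * W <= n * T + q * W -> W < n * T.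
Proof. nia. Qed.

Lemma bounds_le n W T q r : 0 < W -> r * (r - 1) < n ->
  n * W <= n * T + q * W -> n * n * T + n * r * W <= n * n * W + r * (r - 1) * W ->
  r <= q.
Proof.
move=> W0 rn low up.
have lowM : n * n * W <= n * n * T + n * q * W.
  by rewrite -!mulnA -mulnDr leq_mul2l low orbT.
have rW : r * (r - 1) * W < n * W by rewrite ltn_pmul2r.
have : n * r * W < n * q.+1 * W by rewrite mulnS mulnDl; lia.
by rewrite ltn_pmul2r // ltn_pmul2l ?ltnS //; lia.
Qed.

Lemma exists_subset_card (T : finType) (P : {set T}) k :
  k <= #|P| -> exists2 D : {set T}, D \subset P & #|D| = k.
Proof.
move=> kP; exists [set x in take k (enum P)].
  by apply/subsetP => x; rewrite inE => /mem_take; rewrite mem_enum.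
rewrite cardsE (card_uniqP _) ?take_uniq ?enum_uniq // size_takel //.
by rewrite -cardE.
Qed.

Section EdgeStep.
Variable X : finType.
Implicit Types P Q D : {set X * X}.
Variables (A B S : {set X * X}) (e : X * X).
Hypotheses (lAB : loopless_mod A B) (pAB : parallel_free_mod A B) (eB : e \in B).
Hypotheses (Se : S \subset [set e]) (p_target : parallel_free_mod (S :|: A) (B :\ e)).

(* On [b ^ 2 + 2] vertices the estimates [chom_complete_lower] and
   [chom_complete_upper] determine the numbers of identified and kept pairs. *)
Let b := #|B|.
Let n := b * b + 2.
Local Notation W D := (chom D set0 (complete n)).
Let T0 := chom (S :|: A) (B :\ e) (complete n).

Let b_gt0 : 0 < b.
Proof. by apply/card_gt0P; exists e. Qed.

Lemma card_target : #|B :\ e| = b - 1.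
Proof. by rewrite /b (cardsD1 e B) eB add1n subn1. Qed.

Let S_sub : S \subset B.
Proof. by apply: subset_trans Se _; rewrite sub1set. Qed.

Let card_S : #|S| <= 1.
Proof. by rewrite -(cards1 e) subset_leq_card. Qed.

Lemma loopless_target : loopless_mod (S :|: A) (B :\ e).
Proof.
move=> q; rewrite in_setD1 => /andP[qe qB].
by move: Se; rewrite subset1 => /orP[] /eqP ->; [apply: pAB | rewrite set0U; apply: lAB].
Qed.

Let W_gt0 D : 0 < W D.
Proof. by apply: chom_complete_gt0; rewrite /n addn2. Qed.

Lemma chom_complete_ident D : D \subset B -> #|D| <= 2 -> n ^ #|D| * W (D :|: A) = W A.
Proof.
move=> DB; case cD: #|D| => [|[|[|//]]] _.
- by rewrite (cards0_eq cD) set0U expn0 mul1n.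
- have /cards1P[f Df] : #|D| == 1 by rewrite cD.
  have fB : f \in B by rewrite (subsetP DB) // Df set11.
  by rewrite Df expn1 chom_complete_cross ?lAB.
- have /cards2P[f [g [fg Df]]] : #|D| == 2 by rewrite cD.
  have [fB gB] : f \in B /\ g \in B by rewrite !(subsetP DB) // Df !inE eqxx ?orbT.
  by rewrite Df -setUA -mulnA !chom_complete_cross ?lAB ?pAB.
Qed.

Lemma target_lower : n * W (S :|: A) <= n * T0 + (b - 1) * W (S :|: A).
Proof. by have := chom_complete_lower n loopless_target; rewrite card_target. Qed.

Lemma target_lt : W (S :|: A) < n * T0.
Proof. by apply: lower_bound_lt (W_gt0 _) _ target_lower; rewrite /n; nia. Qed.

Lemma card_ident_part P Q : P \subset B -> Q \subset B ->
  chom (A :|: P) Q (complete n) = T0 -> #|P| = #|S|.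
Proof.
move=> PB QB hT; have WS := chom_complete_ident S_sub (leq_trans card_S (isT : 1 <= 2)).
case: (ltngtP #|P| #|S|) => // cmp; exfalso.
- have P0 : P = set0 by apply/eqP; rewrite -cards_eq0; lia.
  have S1 : #|S| = 1 by lia.
  rewrite P0 setU0 in hT.
  have low : n * W A <= n * T0 + b * W A.
    rewrite -hT; apply: leq_trans (chom_complete_lower n (loopless_mod_sub QB lAB)) _.
    by rewrite leq_add2l leq_mul2r subset_leq_card ?orbT.
  have lt : W A < n * T0 by apply: lower_bound_lt (W_gt0 A) _ low; rewrite /n; nia.
  have le : n * T0 <= W A by rewrite -WS S1 expn1 leq_mul2l chom_mono ?sub0set ?orbT.
  by move: lt; rewrite ltnNge le.
- have [D DP cD] := exists_subset_card cmp.
  have TD : T0 <= W (D :|: A) by rewrite -hT chom_mono // ?sub0set // setUC setUS.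
  have := chom_complete_ident (subset_trans DP PB); rewrite cD ltnS card_S -WS expnS.
  move=> /(_ isT) /eqP; rewrite mulnAC [X in _ == X]mulnC eqn_pmul2r; last first.
    by rewrite expn_gt0 /n addn2.
  move=> /eqP nD; have := target_lt; rewrite -nD ltn_mul2l => /andP[_].
  by rewrite ltnNge TD.
Qed.

Lemma card_edge_part P Q : P \subset B -> Q \subset B -> [disjoint P & Q] ->
  chom (A :|: P) Q (complete n) = T0 -> #|Q| = b - 1.
Proof.
move=> PB QB PQ hT; have PS := card_ident_part PB QB hT.
have WP : W (P :|: A) = W (S :|: A).
  have := chom_complete_ident S_sub (leq_trans card_S (isT : 1 <= 2)).
  rewrite -(chom_complete_ident PB) ?PS ?(leq_trans card_S) // => /eqP.
  by rewrite eqn_pmul2l ?expn_gt0 /n ?addn2 // => /eqP.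
have lQ : loopless_mod (A :|: P) Q.
  move=> q qQ; apply/negP => cq; have := target_lt.
  by rewrite -hT (chom_loop (@complete_simple n) qQ cq) muln0.
have low := chom_complete_lower n lQ; rewrite hT setUC WP in low.
have up := chom_complete_upper n loopless_target p_target; rewrite card_target in up.
have ge : b - 1 <= #|Q| by apply: bounds_le (W_gt0 _) _ low up; rewrite /n; nia.
have PQb : #|P| + #|Q| <= b.
  by rewrite -cardsUI (disjoint_setI0 PQ) cards0 addn0 subset_leq_card // subUset PB.
case: (eqVneq #|Q| b) => [Qb|]; last by lia.
have QeB : Q = B by apply/eqP; rewrite eqEcard QB Qb leqnn.
have S0 : S = set0 by apply/eqP; rewrite -cards_eq0 -PS; lia.
have P0 : P = set0 by apply/eqP; rewrite -cards_eq0; lia.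
have upB := chom_complete_upper n lAB pAB.
rewrite QeB P0 setU0 in hT; rewrite hT -/b in upB.
have := target_lower; rewrite S0 set0U => lowB.
have : b <= b - 1 by apply: bounds_le (W_gt0 A) _ lowB upB; rewrite /n; nia.
by move: b_gt0; lia.
Qed.

End EdgeStep.

Section Invariance.
Variable EQ : graph -> graph -> Prop.
Hypothesis EQ_compl : forall G H, simple G -> simple H -> EQ G H -> EQ (compl G) (compl H).
Hypothesis EQ_tensor : forall G H K, EQ G H -> EQ (tensor G K) (tensor H K).

Definition invariant (f : graph -> nat) :=
  forall G H, simple G -> simple H -> EQ G H -> f G = f H.

Section Labellings.
Variable X : finType.
Implicit Types (A B S : {set X * X}) (t : {ffun X * X -> 'I_3}).

Local Notation term A B t := (chom (A :|: ident_part t B) (edge_part t B)).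

Section Term.
Local Open Scope ring_scope.

(* Invariance of [chom A B] on [compl (G x K)] and [compl (H x K)] is, by
   [chom_compl], a linear relation between the multiplicative functions
   [term A B t]; so the coefficients of the terms agreeing with [term A B t0],
   which all carry the sign of [t0], sum to zero. *)
Lemma invariant_term A B t0 :
  invariant (chom A B) -> t0 \in labellings B ->
  (exists2 K, simple K & term A B t0 K != 0%N) ->
  (forall t, t \in labellings B ->
     (forall K, simple K -> term A B t K = term A B t0 K) ->
     (#|ident_part t B| + #|edge_part t B| = #|ident_part t0 B| + #|edge_part t0 B|)%N) ->
  invariant (term A B t0).
Proof.
move=> IAB Bt0 [K0 sK0 nz] same_sign G H sG sH EGH.
pose psi t (K : graph) : int := (term A B t K)%:R.
pose sg t : int := (-1) ^+ (#|ident_part t B| + #|edge_part t B|).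
pose a t := sg t * (psi t G - psi t H).
have psiM t K1 K2 : simple K1 -> simple K2 -> psi t (tensor K1 K2) = psi t K1 * psi t K2.
  by move=> _ _; rewrite /psi chomM natrM.
have rel K : simple K -> \sum_(t in labellings B) a t * psi t K = 0.
  move=> sK; have [sGK sHK] := (@tensor_simple G K sG, @tensor_simple H K sH).
  have := IAB _ _ (@compl_simple _) (@compl_simple _) (EQ_compl sGK sHK (EQ_tensor K EGH)).
  move/(congr1 (fun m : nat => m%:R : int)); rewrite !chom_compl //.
  move/eqP; rewrite -subr_eq0 -sumrB => /eqP E; rewrite -[RHS]E; apply: eq_bigr => t _.
  by rewrite /a /psi !chomM !natrM /sg mulrBr mulrBl !mulrA.
have tensorD K1 K2 : simple K1 -> simple K2 -> simple (tensor K1 K2).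
  by move=> sK1 _; apply: tensor_simple.
have nz0 : exists2 K, simple K & psi t0 K != 0 by exists K0; rewrite // pnatr_eq0.
have := sum_agree_eq0 tensorD psiM rel nz0.
rewrite (eq_bigr (fun _ => a t0)); last first.
  move=> t /andP[Bt /classicbP same]; rewrite /a /sg same_sign ?same //.
  by move=> K sK; apply/eqP; rewrite -(eqr_nat int); apply/eqP; exact: same.
rewrite sumr_const => /eqP; rewrite mulrn_eq0 => /orP[/eqP/card0_eq/(_ t0)|].
  by rewrite [in X in X = _ -> _]unfold_in /= Bt0 agree_refl.
by rewrite /a mulf_eq0 signr_eq0 subr_eq0 eqr_nat => /eqP.
Qed.

End Term.

Lemma invariant_edge_step A B S e :
  loopless_mod A B -> parallel_free_mod A B -> e \in B ->
  S \subset [set e] -> parallel_free_mod (S :|: A) (B :\ e) ->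
  invariant (chom A B) -> invariant (chom (S :|: A) (B :\ e)).
Proof.
move=> lAB pAB eB Se pT IAB.
pose t0 : {ffun X * X -> 'I_3} := [ffun p =>
  if p \in S then Ordinal (isT : 1 < 3)
  else if p \in B :\ e then Ordinal (isT : 2 < 3) else ord0].
have SB : S \subset B by apply: subset_trans Se _; rewrite sub1set.
have P0 : ident_part t0 B = S.
  apply/setP => p; rewrite !inE ffunE; case: ifP => pS; first by rewrite (subsetP SB).
  by case: ifP; rewrite andbF.
have Q0 : edge_part t0 B = B :\ e.
  apply/setP => p; rewrite !inE ffunE; case: ifP => pS /=.
    by move/subsetP/(_ p pS): Se; rewrite inE => ->; rewrite andbF.
  by rewrite !inE; case: (p != e); case: (p \in B).
rewrite setUC -Q0 -P0; apply: invariant_term IAB _ _ _.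
- apply/pffun_onP; split => //; apply/subsetP => p; rewrite inE ffunE.
  case: ifP => [pS _|_]; first exact: (subsetP SB).
  by case: ifP => [/setD1P[] |].
- exists (complete (#|B| * #|B| + 2)); first exact: complete_simple.
  by rewrite P0 Q0 setUC; apply/eqP => T0; have := target_lt lAB pAB eB Se; rewrite T0 muln0.
move=> t _ same; have := same _ (@complete_simple (#|B| * #|B| + 2)).
rewrite P0 Q0 [A :|: S]setUC => hT.
have [PB QB] : ident_part t B \subset B /\ edge_part t B \subset B.
  by split; apply/subsetP => p; rewrite inE => /andP[].
have PQ : [disjoint ident_part t B & edge_part t B].
  rewrite -setI_eq0; apply/eqP/setP => p; rewrite !inE.
  by case: eqP => [->|]; rewrite ?andbF.
rewrite (card_ident_part lAB pAB eB Se PB QB hT).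
by rewrite (card_edge_part lAB pAB eB Se pT PB QB PQ hT) card_target.
Qed.

End Labellings.

Section MinorModel.
Variables F F' : graph.
Hypotheses (sF : simple F) (sF' : simple F').
Variable phi : F -> option F'.
Hypothesis phi_onto : forall v : F', exists x : F, phi x == Some v.
Hypothesis phi_conn : forall (v : F') (x y : F), phi x == Some v -> phi y == Some v ->
  connect [rel a b | [&& gE a b, phi a == Some v & phi b == Some v]] x y.
Hypothesis phi_edge : forall v w : F', gE v w ->
  exists x y : F, [&& phi x == Some v, phi y == Some w & gE x y].
Implicit Types (A B S : {set F * F}) (G : graph).

Definition oriented_edges : {set F * F} :=
  [set p | gE p.1 p.2 && (enum_rank p.1 < enum_rank p.2)].

Lemma oriented_edge p : p \in oriented_edges -> gE p.1 p.2.
Proof. by rewrite inE => /andP[]. Qed.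

Lemma oriented_neq p : p \in oriented_edges -> p.1 != p.2.
Proof. by move/oriented_edge; apply: contraTneq => ->; exact: sF. Qed.

Lemma edge_oriented x y : gE x y -> ((x, y) \in oriented_edges) || ((y, x) \in oriented_edges).
Proof.
move=> xy; rewrite !inE /= xy gE_sym xy /=.
case: (ltngtP (enum_rank x) (enum_rank y)) => // /val_inj /enum_rank_inj exy.
by move: xy; rewrite exy (negbTE (sF y)).
Qed.

Lemma hom_chom_oriented G : hom F G = chom set0 oriented_edges G.
Proof.
rewrite hom_chom /chom; apply: eq_card => h; rewrite !inE; congr (_ && _).
apply/forall_inP/forall_inP => H p pE.
  by apply: H; rewrite inE; exact: oriented_edge.
move: pE; rewrite inE => /edge_oriented /orP[] pE.
  by case: p pE => x y pE; exact: H.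
by have := H _ pE; rewrite gE_sym.
Qed.

Lemma loopless_oriented B : B \subset oriented_edges -> loopless_mod set0 B.
Proof.
move=> sB q qB; apply/negP => /conn_set0 e.
by have := oriented_neq (subsetP sB q qB); rewrite e eqxx.
Qed.

Lemma parallel_free_oriented B : B \subset oriented_edges -> parallel_free_mod set0 B.
Proof.
move=> sB q q' qB q'B qq'; apply/negP => /conn_U1 /or3P[].
- by apply/negP; apply: loopless_oriented qB.
- case/andP => /conn_set0 e1 /conn_set0 e2.
  by move: qq'; case: q q' e1 e2 {qB q'B} => a b [c d] /= -> ->; rewrite eqxx.
- case/andP => /conn_set0 e1 /conn_set0 e2.
  move: (subsetP sB q qB) (subsetP sB q' q'B); rewrite !inE e1 -e2 => /andP[_ l1] /andP[_ l2].
  by move: (ltn_trans l1 l2); rewrite ltnn.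
Qed.

Lemma invariant_chom_oriented B :
  invariant (hom F) -> B \subset oriented_edges -> invariant (chom set0 B).
Proof.
move=> IF; move Dk: #|oriented_edges :\: B| => k; elim: k B Dk => [|k IH] B Dk sB.
  have -> : B = oriented_edges.
    by apply/eqP; rewrite eqEsubset sB -setD_eq0 -cards_eq0 Dk.
  by move=> G H sG sH E; rewrite -!hom_chom_oriented; exact: IF.
have [e] : exists e, e \in oriented_edges :\: B by apply/set0Pn; rewrite -cards_eq0 Dk.
rewrite in_setD => /andP[eB eE].
have sB' : e |: B \subset oriented_edges by rewrite subUset sub1set eE sB.
have Dk' : #|oriented_edges :\: (e |: B)| = k.
  apply/eqP; rewrite -eqSS -Dk (cardsD1 e (oriented_edges :\: B)) in_setD eB eE.
  by rewrite setDDl setUC.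
have := @invariant_edge_step _ set0 (e |: B) set0 e (loopless_oriented sB')
  (parallel_free_oriented sB') (setU11 e B) (sub0set _).
by rewrite setU0 setU1K //; apply; [exact: parallel_free_oriented | exact: IH].
Qed.

Definition branch_edges : {set F * F} :=
  [set p in oriented_edges | (phi p.1 == phi p.2) && (phi p.1 != None)].

Definition spans_branches S :=
  (S \subset branch_edges) && [forall x, forall y, conn branch_edges x y ==> conn S x y].

(* Minimality makes it acyclic ([forest_acyclic]), so contracting its edges
   one at a time never creates a loop. *)
Definition forest := [arg min_(S < branch_edges | spans_branches S) #|S|].

Lemma forest_spec : spans_branches forest /\ forall S, spans_branches S -> #|forest| <= #|S|.
Proof.
rewrite /forest; case: arg_minnP => [|S PS H]; last by split.
by rewrite /spans_branches subxx; apply/forallP => x; apply/forallP => y; apply/implyP.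
Qed.

Lemma forest_sub : forest \subset branch_edges.
Proof. by case: forest_spec => /andP[]. Qed.

Lemma forest_conn x y : conn branch_edges x y -> conn forest x y.
Proof. by case: forest_spec => /andP[_ /forallP /(_ x) /forallP /(_ y) /implyP]. Qed.

Lemma branch_edge_label p : p \in branch_edges -> phi p.1 = phi p.2.
Proof. by rewrite inE => /andP[_ /andP[/eqP]]. Qed.

Lemma conn_branch_label S x y : S \subset branch_edges -> conn S x y -> phi x = phi y.
Proof. by move=> sS; apply: conn_label => p /(subsetP sS) /branch_edge_label. Qed.

Lemma forest_acyclic f : f \in forest -> ~~ conn (forest :\ f) f.1 f.2.
Proof.
move=> fT; apply/negP => cf.
have spans_f : spans_branches (forest :\ f).
  rewrite /spans_branches (subset_trans (subD1set forest f) forest_sub) /=.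
  apply/forallP => x; apply/forallP => y; apply/implyP => /forest_conn.
  rewrite -{1}(setD1K fT) => /conn_U1 /or3P[//|/andP[x1 y2]|/andP[x2 y1]].
    exact: conn_trans (conn_trans x1 cf) y2.
  by apply: conn_trans (conn_trans x2 _) y1; rewrite conn_sym.
by have := proj2 forest_spec _ spans_f; rewrite (cardsD1 f forest) fT add1n ltnn.
Qed.

Lemma branch_forest_conn x y v : phi x = Some v -> phi y = Some v -> conn forest x y.
Proof.
move=> xv yv; apply: forest_conn.
have := phi_conn (introT eqP xv) (introT eqP yv); apply: connect_sub => a b /=.
case/and3P => ab /eqP av /eqP bv; apply: connect1.
have inB p : p \in oriented_edges -> phi p.1 = Some v -> phi p.2 = Some v -> p \in branch_edges.
  by move=> pE e1 e2; rewrite inE pE e1 e2 eqxx.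
case/orP: (edge_oriented ab) => E; rewrite /pair_rel.
  by rewrite (inB (a, b) E av bv).
by rewrite (inB (b, a) E bv av) orbT.
Qed.

Definition joins p v w :=
  ((phi p.1 == Some v) && (phi p.2 == Some w)) || ((phi p.1 == Some w) && (phi p.2 == Some v)).

Lemma joins_sym p v w : joins p v w = joins p w v.
Proof. by rewrite /joins orbC. Qed.

Definition rep_edge (v w : F') : option (F * F) := [pick p in oriented_edges | joins p v w].

Definition rep_edges : {set F * F} :=
  [set p | [exists v, exists w, gE v w && (rep_edge v w == Some p)]].

Lemma rep_edge_sym v w : rep_edge v w = rep_edge w v.
Proof. by apply: eq_pick => p; rewrite joins_sym. Qed.

Lemma rep_edgesP p : p \in rep_edges ->
  exists v w, [/\ gE v w, p \in oriented_edges, rep_edge v w = Some p & joins p v w].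
Proof.
rewrite inE => /existsP[v /existsP[w /andP[vw /eqP r]]]; exists v, w.
by move: r; rewrite /rep_edge; case: pickP => // q /andP[qE c] [<-].
Qed.

Lemma rep_edges_sub : rep_edges \subset oriented_edges.
Proof. by apply/subsetP => p /rep_edgesP [v [w []]]. Qed.

Lemma rep_edge_labels p : p \in rep_edges ->
  exists a b, [/\ phi p.1 = Some a, phi p.2 = Some b & gE a b].
Proof.
move/rep_edgesP => [v [w [vw _ _ /orP[] /andP[/eqP e1 /eqP e2]]]]; first by exists v, w.
by exists w, v; rewrite gE_sym.
Qed.

Lemma rep_edge_cross p : p \in rep_edges -> phi p.1 != phi p.2.
Proof.
move/rep_edge_labels => [a [b [-> -> ab]]]; apply/negP => /eqP [eab].
by move: ab; rewrite eab (negbTE (sF' b)).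
Qed.

Lemma rep_edge_of p a b :
  p \in rep_edges -> phi p.1 = Some a -> phi p.2 = Some b -> rep_edge a b = Some p.
Proof.
move=> pR pa pb; have [v [w [vw _ r]]] := rep_edgesP pR; rewrite /joins pa pb.
by case/orP=> /andP[/eqP [->] /eqP [->]]; rewrite // rep_edge_sym.
Qed.

Lemma rep_edge_uniq p q : p \in rep_edges -> q \in rep_edges ->
  phi p.1 = phi q.1 -> phi p.2 = phi q.2 -> p = q.
Proof.
move=> pR qR e1 e2; have [a [b [pa pb _]]] := rep_edge_labels pR.
have := rep_edge_of pR pa pb.
by rewrite (rep_edge_of qR (etrans (esym e1) pa) (etrans (esym e2) pb)) => -[].
Qed.

Lemma rep_edge_uniq_rev p q : p \in rep_edges -> q \in rep_edges ->
  phi p.1 = phi q.2 -> phi p.2 = phi q.1 -> p = q.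
Proof.
move=> pR qR e1 e2; have [a [b [pa pb _]]] := rep_edge_labels pR.
have := rep_edge_of pR pa pb; rewrite rep_edge_sym.
by rewrite (rep_edge_of qR (etrans (esym e2) pb) (etrans (esym e1) pa)) => -[].
Qed.

Lemma rep_edge_exists v w : gE v w -> exists2 p, p \in rep_edges & joins p v w.
Proof.
move=> vw; have [x [y /and3P[xv yw xy]]] := phi_edge vw.
case E: (rep_edge v w) => [p|]; last first.
  move: E; rewrite /rep_edge; case: pickP => // none _.
  case/orP: (edge_oriented xy) => H.
    by have := none (x, y); rewrite /= H /joins xv yw.
  by have := none (y, x); rewrite /= H /joins xv yw orbT.
exists p.
  by rewrite inE; apply/existsP; exists v; apply/existsP; exists w; rewrite E eqxx andbT.
by move: E; rewrite /rep_edge; case: pickP => // q /andP[_ c] [<-].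
Qed.

Definition remaining A := (forest :\: A) :|: rep_edges.

Lemma loopless_remaining A : A \subset forest -> loopless_mod A (remaining A).
Proof.
move=> sA q; rewrite in_setU in_setD => /orP[/andP[qA qT]|qR].
  apply: contra (forest_acyclic qT); apply: conn_mono; apply/subsetP => p pA.
  by rewrite in_setD1 (subsetP sA p pA) andbT; apply: contraNneq qA => <-.
apply: contra (rep_edge_cross qR) => /conn_branch_label -> //.
exact: subset_trans sA forest_sub.
Qed.

Lemma parallel_free_remaining A : A \subset forest -> parallel_free_mod A (remaining A).
Proof.
move=> sA q q' qB; rewrite in_setU in_setD => /orP[/andP[q'A q'T]|q'R] qq'.
  apply: (loopless_remaining (A := q' |: A)); first by rewrite subUset sub1set q'T sA.
  by move: qB; rewrite !in_setU !in_setD in_setU1 (negbTE qq').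
have sAB := subset_trans sA forest_sub.
apply/negP => /conn_U1 /or3P[]; first by apply/negP; apply: loopless_remaining.
- case/andP => /(conn_branch_label sAB) e1 /(conn_branch_label sAB) e2.
  move: qB; rewrite in_setU in_setD => /orP[/andP[_ qT]|qR].
    have := rep_edge_cross q'R.
    by rewrite -e1 e2 (branch_edge_label (subsetP forest_sub q qT)) eqxx.
  by move: qq'; rewrite (rep_edge_uniq qR q'R e1 (esym e2)) eqxx.
- case/andP => /(conn_branch_label sAB) e1 /(conn_branch_label sAB) e2.
  move: qB; rewrite in_setU in_setD => /orP[/andP[_ qT]|qR].
    have := rep_edge_cross q'R.
    by rewrite e2 -e1 (branch_edge_label (subsetP forest_sub q qT)) eqxx.
  by move: qq'; rewrite (rep_edge_uniq_rev qR q'R e1 (esym e2)) eqxx.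
Qed.

Lemma remainingD1 A e : e \in A -> A \subset forest -> remaining (A :\ e) :\ e = remaining A.
Proof.
move=> eA sA; apply/setP => p; rewrite !(in_setD1, in_setU, in_setD).
case: (eqVneq p e) => [->|//]; rewrite eA /=; apply/esym/negbTE.
apply: contraL (subsetP sA e eA) => /rep_edge_cross.
by apply: contra => /(subsetP forest_sub) /branch_edge_label ->.
Qed.

Lemma invariant_contract_forest A :
  invariant (hom F) -> A \subset forest -> invariant (chom A (remaining A)).
Proof.
move=> IF; move Dk: #|A| => k; elim: k A Dk => [|k IH] A Dk sA.
  rewrite (cards0_eq Dk); apply: invariant_chom_oriented => //.
  rewrite subUset rep_edges_sub andbT setD0.
  by apply: subset_trans forest_sub _; apply/subsetP => p; rewrite inE => /andP[].
have [e eA] : exists e, e \in A by apply/card_gt0P; rewrite Dk.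
have sA' : A :\ e \subset forest by apply: subset_trans (subD1set A e) sA.
have eR : e \in remaining (A :\ e) by rewrite !inE eqxx (subsetP sA e eA).
have := invariant_edge_step (loopless_remaining sA') (parallel_free_remaining sA') eR (subxx _).
rewrite remainingD1 // setD1K //; apply; first exact: parallel_free_remaining.
by apply: IH sA'; move: Dk; rewrite (cardsD1 e A) eA add1n => -[].
Qed.

Definition unbranched := {x : F | phi x == None}.

Lemma cmaps_branch_const G (h : {ffun F -> G}) x y v :
  h \in cmaps G forest rep_edges -> phi x = Some v -> phi y = Some v -> h x = h y.
Proof.
rewrite inE => /andP[hA _] xv yv.
by apply: (identifies_conn hA); apply: branch_forest_conn xv yv.
Qed.

Lemma cmaps_expand G (g : {ffun F' -> G}) (d : {ffun unbranched -> G}) : homb g ->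
  exists2 h, h \in cmaps G forest rep_edges &
    (forall x v, phi x = Some v -> h x = g v) /\ (forall s, h (val s) = d s).
Proof.
move=> hg; have [f Hf] : exists f : F -> G, forall x,
    (forall v, phi x = Some v -> f x = g v) /\ (forall s : unbranched, val s = x -> f x = d s).
  apply: (@fin_all_exists F (fun _ => Finite.sort G) (fun x y =>
    (forall v, phi x = Some v -> y = g v) /\ (forall s : unbranched, val s = x -> y = d s))) => x.
  case E: (phi x) => [v|].
    exists (g v); split; first by move=> w [<-].
    by move=> s sx; have := valP s; rewrite sx E.
  have Ex : phi x == None by rewrite E.
  exists (d (exist _ x Ex)); split => // s sx.
  by congr (d _); apply: val_inj.
exists [ffun x => f x]; last first.
  by split=> [x v xv|s]; rewrite ffunE; [apply: (Hf x).1 | apply: (Hf _).2].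
rewrite inE; apply/andP; split.
  apply/forall_inP => p pT; rewrite !ffunE.
  move: (subsetP forest_sub p pT); rewrite inE => /andP[_ /andP[/eqP e12 ne]].
  case E: (phi p.1) ne => [v|] // _.
  by rewrite ((Hf p.1).1 v E) ((Hf p.2).1 v) // -e12.
apply/forall_inP => p pR; rewrite !ffunE.
have [a [b [pa pb ab]]] := rep_edge_labels pR.
rewrite ((Hf p.1).1 a pa) ((Hf p.2).1 b pb).
by have := forallP (forallP hg a) b; rewrite ab.
Qed.

(* Restricting to one vertex per branch set and to the vertices outside the
   branch sets is a bijection onto [hom F' G] times the free maps. *)
Lemma chom_contracted G :
  chom forest rep_edges G = hom F' G * #|G| ^ #|[set x : F | phi x == None]|.
Proof.
have [xv Hxv] : exists xv : F' -> F, forall v, phi (xv v) = Some v.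
  apply: (@fin_all_exists F' (fun _ => Finite.sort F) (fun v x => phi x = Some v)) => v.
  by have [x /eqP] := phi_onto v; exists x.
pose restr (h : {ffun F -> G}) : {ffun F' -> G} * {ffun unbranched -> G} :=
  ([ffun v => h (xv v)], [ffun s : unbranched => h (val s)]).
have -> : hom F' G * #|G| ^ #|[set x : F | phi x == None]| =
          #|setX [set g : {ffun F' -> G} | homb g] [set: {ffun unbranched -> G}]|.
  rewrite cardsX cardsT card_ffun card_sig; congr (_ * _ ^ _).
    by apply: eq_card => g; rewrite !inE.
  by apply: eq_card => x; rewrite !inE.
rewrite /chom -(@card_in_imset _ _ restr); last first.
  move=> h1 h2 h1S h2S [/ffunP E1 /ffunP E2]; apply/ffunP => x.
  case E: (phi x) => [v|].
    rewrite (cmaps_branch_const h1S E (Hxv v)) (cmaps_branch_const h2S E (Hxv v)).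
    by have := E1 v; rewrite !ffunE.
  have Ex : phi x == None by rewrite E.
  by have := E2 (exist _ x Ex); rewrite !ffunE.
apply: eq_card => -[g d]; rewrite inE /=; apply/imsetP/andP.
  move=> [h hS [-> ->]]; split; last by rewrite inE.
  rewrite inE; apply/forallP => u; apply/forallP => v; apply/implyP => uv.
  have [p pR /orP[] /andP[/eqP e1 /eqP e2]] := rep_edge_exists uv;
    have := hS; rewrite inE => /andP[_ /forall_inP /(_ p pR)]; rewrite !ffunE.
    by rewrite (cmaps_branch_const hS e1 (Hxv u)) (cmaps_branch_const hS e2 (Hxv v)).
  by rewrite gE_sym (cmaps_branch_const hS e1 (Hxv v)) (cmaps_branch_const hS e2 (Hxv u)).
rewrite inE => -[hg _]; have [h hS [hB hU]] := cmaps_expand d hg.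
by exists h => //; congr pair; apply/ffunP => z; rewrite !ffunE ?hU // (hB _ _ (Hxv z)).
Qed.

Lemma hom_card0 G : #|G| = 0 -> hom F' G = #|G| ^ #|F'|.
Proof.
move=> G0; rewrite /hom -card_ffun; apply: eq_card => g; rewrite !inE.
by apply/forallP => u; have := card0_eq G0 (g u); rewrite inE.
Qed.

(* The vertices outside the branch sets contribute the factor [#|G| ^ d]
   to [chom forest rep_edges G]; it is invariant as well, since
   [#|G| ^ #|F|] is the invariant [chom set0 set0 G]. *)
Lemma invariant_minor : invariant (hom F) -> invariant (hom F').
Proof.
move=> IF G H sG sH E.
have := invariant_contract_forest IF (subxx forest) sG sH E.
rewrite /remaining setDv set0U !chom_contracted.
set d := #|[set x : F | phi x == None]|.
have [->|d0] := eqVneq d 0; first by rewrite !expn0 !muln1.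
have := invariant_chom_oriented IF (sub0set oriented_edges) sG sH E; rewrite !chom00.
have F0 : 0 < #|F|.
  by rewrite -cardsT (leq_trans _ (subset_leq_card (subsetT [set x | phi x == None]))) ?lt0n.
move/(expIn F0) => GH.
have [G0|Gn0] := eqVneq #|G| 0.
  by rewrite (hom_card0 G0) (hom_card0 (etrans (esym GH) G0)) GH.
by rewrite GH => /eqP; rewrite eqn_pmul2r ?expn_gt0 ?lt0n -?GH ?Gn0 // => /eqP.
Qed.

End MinorModel.

End Invariance.

Theorem theorem1 (L : Type) (models : graph -> L -> Prop)
  (Hinv : iso_invariant models)
  (Hsc : self_complementary models)
  (Hex : exists C : graph -> Prop,
      (forall F, C F -> simple F) /\
      (forall G H : graph, simple G -> simple H ->
         (hom_indist C G H <-> L_equiv models G H))) :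
  exists C' : graph -> Prop,
    (forall F, C' F -> simple F) /\ minor_closed C' /\
    (forall G H : graph, simple G -> simple H ->
       (hom_indist C' G H <-> L_equiv models G H)).
Proof.
case: Hex => C [C_simple C_equiv].
have EQ_compl G H : simple G -> simple H ->
    hom_indist C G H -> hom_indist C (compl G) (compl H).
  move=> sG sH /(C_equiv _ _ sG sH) LGH.
  by apply/(C_equiv _ _ (@compl_simple G) (@compl_simple H)); apply: L_equiv_compl.
exists (fun F => simple F /\ invariant (hom_indist C) (hom F)).
split; first by move=> F [].
split.
  move=> F F' [sF IF] sF' [phi [onto [conn edge]]]; split => //.
  exact: (invariant_minor EQ_compl (@hom_indist_tensor C) sF sF' onto conn edge IF).
move=> G H sG sH; split => [HI | LGH F [sF IF]].
  apply/(C_equiv _ _ sG sH) => F CF; apply: HI; split; first exact: C_simple.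
  by move=> G' H' _ _; apply.
by apply: IF => //; apply/(C_equiv _ _ sG sH).
Qed.
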